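(* For the average-cost MDP $\Lambda$ described in the context, there exists an optimal policy that is deterministic and stationary, i.e., there exists a map $\phi^*:\mathbb{N}^+\to\mathcal{A}$ such that the stationary policy that uses action $\phi^*(s)$ whenever the state is $s$ minimizes $V(\phi)$ over all (possibly history-dependent, randomized) policies $\phi$.
   Context: Fix $N\in\mathbb{N}^+$ vehicle types $\mathcal{N}=\{1,\dots,N\}$. Type $n$ has arrival probability $p_n\in(0,1]$, mean operational cost $c_n\ge 0$ and mean sensing capability $r_n\in(0,1]$. Fix constants $\beta\in(0,1)$ and $\epsilon>0$. The action set is $\mathcal{A}=2^{\mathcal{N}}$ (all subsets of $\mathcal{N}$, including $\emptyset$). For $a\in\mathcal{A}$ define the success probability $Q_\emptyset=0$ and $Q_a=1-\prod_{n\in a}(1-r_np_n)$ for $a\neq\emptyset$, and the expected recruitment cost $E_a=\sum_{n\in a}p_nc_n$ ($E_\emptyset=0$). For a state (age) $\delta\in\mathbb{N}^+$ define the expected freshness gain $G_a(\delta)=Q_a(\delta^2+2\delta)\epsilon-(1+\delta)^2\epsilon$ and the immediate cost $u(\delta,a)=(1-\beta)E_a-\beta G_a(\delta)$. The MDP $\Lambda$ has state space $\mathcal{S}=\mathbb{N}^+$, action space $\mathcal{A}$, and transition probabilities: from state $s$ under action $a$, go to state $1$ with probability $Q_a$ and to state $s+1$ with probability $1-Q_a$. For a policy $\phi$ (choosing action $A(t)$ at time $t$), the average cost is $V(\phi)=\limsup_{T\to\infty}\frac1T\mathbb{E}^\phi\big[\sum_{t=1}^T u(S(t),A(t))\big]$,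 with $S(1)=1$; a policy is optimal if it minimizes $V$. *)

From HB Require Import structures.
From mathcomp Require Import all_boot all_order all_algebra.
From mathcomp Require Import all_classical all_reals all_analysis.
Set Implicit Arguments. Unset Strict Implicit. Unset Printing Implicit Defensive.
Import Order.TTheory GRing.Theory Num.Theory.
Local Open Scope ring_scope.

Section MDP.
Variables (R : realType) (N : nat) (p c r : 'I_N -> R) (beta eps : R).

(* vehicle types are indexed by 'I_N = {0,...,N-1}; actions are subsets *)
Definition action := {set 'I_N}.

(* success probability Q_a (empty product = 1, so Q_set0 = 0) *)
Definition Qa (a : action) : R := 1 - \prod_(n in a) (1 - r n * p n).

Definition Ea (a : action) : R := \sum_(n in a) p n * c n.

Definition Ga (a : action) (d : nat) : R :=
  Qa a * ((d%:R) ^+ 2 + 2 * d%:R) * eps - (1 + d%:R) ^+ 2 * eps.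

Definition ucost (d : nat) (a : action) : R := (1 - beta) * Ea a - beta * Ga a d.

(* A general (history-dependent, randomized) policy: given the past
   state-action pairs (S(1),A(1)),...,(S(t-1),A(t-1)) and the current state
   S(t), a probability weight on each action. *)
Definition policy := seq (nat * action) -> nat -> action -> R.

Definition is_policy (pi : policy) : Prop :=
  (forall h s a, 0 <= pi h s a) /\ (forall h s, \sum_(a : action) pi h s a = 1).

(* expcost pi T h s = expected total cost of the next T steps, given the
   history h and current state s (transition: to 1 w.p. Q_a, to s+1 w.p. 1-Q_a) *)
Fixpoint expcost (pi : policy) (T : nat) (h : seq (nat * action)) (s : nat) : R :=
  match T with
  | 0 => 0
  | T'.+1 => \sum_(a : action) pi h s a *
      (ucost s a + Qa a * expcost pi T' (rcons h (s, a)) 1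
                 + (1 - Qa a) * expcost pi T' (rcons h (s, a)) s.+1)
  end.

Definition avgcost (pi : policy) : \bar R :=
  limn_esup (fun T : nat => ((expcost pi T.+1 [::] 1) / T.+1%:R)%:E).

Definition stationary (phi : nat -> action) : policy :=
  fun _ s a => if a == phi s then 1 else 0.

End MDP.

From HB Require Import structures.
From mathcomp Require Import all_boot all_order all_algebra.
From mathcomp Require Import all_classical all_reals all_analysis.
From mathcomp Require Import ring lra.
Set Implicit Arguments. Unset Strict Implicit. Unset Printing Implicit Defensive.
Import Order.TTheory GRing.Theory Num.Theory.
Import numFieldNormedType.Exports.
Local Open Scope ring_scope.

(* Write u(s, a) = K_a + beta eps (1 - Q_a) (s^2 + 2 s) with K_a >= 0.  If (g, h)
   solves the average-cost optimality equation
     g + h(s) = min_a [u(s, a) + Q_a h(1) + (1 - Q_a) h(s + 1)]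
   with h bounded below and h(s) = O(s^2), the stationary policy attaining the
   minimum has average cost at most g, while every policy has average cost at
   least g: the expected one-step growth of h(S(T)) is dominated by a multiple
   of the cost paid at time T, so a policy beating g would accumulate costs
   growing quadratically in T.
   Such a pair exists.  Beyond a threshold age the action of maximal success
   probability (cheapest among those) is optimal, and there the equation
   without its h(1) term has an explicit quadratic solution; finitely many
   steps of value iteration extend it to all ages.  The result depends
   continuously on g, and the intermediate value theorem gives g with h(1) = 0. *)

Lemma lipschitz_continuous (R : realType) (f : R -> R) (L : R) :
  (forall x y, `|f x - f y| <= L * `|x - y|) -> continuous f.
Proof.
move=> f_lip x; apply/cvgrPdist_lt => e e_gt0.
have L1_gt0 : 0 < `|L| + 1 by rewrite ltr_wpDl.
near=> z.
apply: le_lt_trans (f_lip x z) _.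
apply: (@le_lt_trans _ _ ((`|L| + 1) * `|x - z|)).
  by apply: ler_wpM2r => //; rewrite (le_trans (ler_norm L)) // lerDl.
rewrite -ltr_pdivlMl //.
near: z; apply: cvgr_dist_lt; last by rewrite mulr_gt0 ?invr_gt0.
exact: cvg_id.
Unshelve. all: by end_near.
Qed.

Section LimnEsup.
Context (R : realType).
Local Open Scope ereal_scope.

Lemma limn_esupE (x : nat -> \bar R) : limn_esup x = ereal_inf (range (esups x)).
Proof. by rewrite limn_esup_lim; apply/cvg_lim => //; exact: cvg_esups_inf. Qed.

Lemma limn_esup_le_eventually (x : nat -> \bar R) (l : R) :
  (forall e, (0 < e)%R -> exists n, forall k, (n <= k)%N -> x k <= (l + e)%:E) ->
  limn_esup x <= l%:E.
Proof.
move=> x_le; apply/lee_addgt0Pr => e e_gt0.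
have [n x_le_n] := x_le e e_gt0.
rewrite limn_esupE; apply: le_trans (ereal_inf_lbound _) _; first by exists n.
by apply: ge_ereal_sup => _ [k /= nk <-]; rewrite -EFinD; exact: x_le_n.
Qed.

Lemma limn_esup_lt_eventually (x : nat -> \bar R) (l : R) : limn_esup x < l%:E ->
  exists n m, (m < l)%R /\ forall k, (n <= k)%N -> x k <= m%:E.
Proof.
rewrite limn_esupE => /ereal_inf_lt [_ [n _ <-] esups_lt].
have x_le k : (n <= k)%N -> x k <= esups x n.
  by move=> nk; apply: ereal_sup_ubound; exists k.
move: esups_lt x_le; case: (esups x n) => [m| |] esups_lt x_le //.
- by exists n, m; split => //; rewrite -lte_fin.
- exists n, (l - 1)%R; split; first by rewrite ltrBlDr ltrDl.
  by move=> k nk; apply: le_trans (x_le k nk) _; rewrite leNye.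
Qed.

End LimnEsup.

Section ConvexSums.
Context (R : numDomainType) (I : finType) (w : I -> R).
Hypothesis w_sum1 : \sum_i w i = 1.

Lemma convex_sum_cst (x : R) : \sum_i w i * x = x.
Proof. by rewrite -mulr_suml w_sum1 mul1r. Qed.

Lemma convex_sum_affine (A B : R) (X : I -> R) :
  \sum_i w i * (A + B * X i) = A + B * \sum_i w i * X i.
Proof.
rewrite mulr_sumr -{2}[A]convex_sum_cst -big_split /=.
by apply: eq_bigr => i _; ring.
Qed.

End ConvexSums.

(* If [A] grew at an eventual rate [m < g], the increments [A (T+1) - A T]
   would grow linearly in [T], making [A] grow quadratically. *)
Lemma increment_growth_contra (R : realType) (A : nat -> R) (g m k E0 : R) (n : nat) :
  m < g -> 0 < k ->
  (forall T, 0 <= A T) ->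
  (forall T, (n <= T)%N -> A T.+1 <= m * T.+1%:R) ->
  (forall T, T.+1%:R * g <= A T.+1 + E0 + k * (A T.+1 - A T)) -> False.
Proof.
move=> mg k_gt0 A_ge0 A_le A_inc.
set d := g - m.
have d_gt0 : 0 < d by rewrite /d subr_gt0.
have inc_ge T : (n <= T)%N -> d * T.+1%:R - E0 <= k * (A T.+1 - A T).
  move=> nT; have := A_inc T; have := A_le T nT.
  have -> : d * T.+1%:R = T.+1%:R * g - m * T.+1%:R by rewrite /d; ring.
  lra.
pose M := maxn n.+1 (Num.trunc ((2 * k * m + E0) / d)).+1.
have nM : (n < M)%N by rewrite /M leq_max leqnn.
have M_gt0 : 0 < M%:R :> R by rewrite ltr0n (leq_trans _ nM).
have A_quad j : j%:R * (d * M%:R - E0) <= k * A (M + j)%N.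
  elim: j => [|j IH]; first by rewrite mul0r addn0 mulr_ge0 // ltW.
  have := inc_ge (M + j)%N (leq_trans (ltnW nM) (leq_addr _ _)).
  have : d * M%:R <= d * (M + j).+1%:R by rewrite ler_pM2l // ler_nat -addnS leq_addr.
  rewrite addnS -natr1; lra.
have A_lin : A (M + M)%N <= m * (M + M)%:R.
  rewrite -(prednK (leq_trans (ltn0Sn n) (leq_trans nM (leq_addr M M)))).
  apply: A_le; rewrite -ltnS prednK; first exact: leq_trans nM (leq_addr _ _).
  exact: leq_trans (ltn0Sn n) (leq_trans nM (leq_addr M M)).
have : M%:R * (d * M%:R - E0) <= M%:R * (2 * k * m).
  apply: le_trans (A_quad M) _.
  have := ler_wpM2l (ltW k_gt0) A_lin; rewrite natrD.
  by have -> : k * (m * (M%:R + M%:R)) = M%:R * (2 * k * m) by ring.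
rewrite ler_pM2l // => M_le.
have : (2 * k * m + E0) / d < M%:R.
  apply: lt_le_trans (truncnS_gt _) _.
  by rewrite ler_nat /M leq_max leqnn orbT.
rewrite ltr_pdivrMr //; lra.
Qed.

Section MDP.
Variables (R : realType) (N : nat) (p c r : 'I_N -> R) (beta eps : R).
Hypotheses (N_gt0 : (0 < N)%N) (p01 : forall n, 0 < p n <= 1)
  (c_ge0 : forall n, 0 <= c n) (r01 : forall n, 0 < r n <= 1)
  (beta01 : 0 < beta < 1) (eps_gt0 : 0 < eps).

Local Notation Q := (Qa p r).
Local Notation u := (ucost p c r beta eps).
Local Notation EC := (expcost p c r beta eps).

Lemma miss_prob01 n : 0 <= 1 - r n * p n <= 1.
Proof.
have /andP[r_gt0 r_le1] := r01 n; have /andP[p_gt0 p_le1] := p01 n.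
apply/andP; split; last by rewrite gerBl mulr_ge0 ?ltW.
by rewrite subr_ge0 -[1]mulr1; apply: ler_pM => //; exact: ltW.
Qed.

Lemma Qa_le1 a : Q a <= 1.
Proof.
by rewrite /Qa lerBlDr lerDl prodr_ge0 // => n _; case/andP: (miss_prob01 n).
Qed.

Lemma Qa_ge0 a : 0 <= Q a.
Proof. by rewrite /Qa subr_ge0 prodr_ile1 // => n _; exact: miss_prob01. Qed.

Lemma subQa_ge0 a : 0 <= 1 - Q a.
Proof. by rewrite subr_ge0 Qa_le1. Qed.

Lemma Qa_setT_gt0 : 0 < Q [set: 'I_N].
Proof.
pose n0 : 'I_N := Ordinal N_gt0.
rewrite /Qa subr_gt0 (bigD1 n0) ?inE //=.
have /andP[r_gt0 _] := r01 n0; have /andP[p_gt0 _] := p01 n0.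
apply: (@le_lt_trans _ _ (1 - r n0 * p n0)); last by rewrite ltrBlDr ltrDl mulr_gt0.
rewrite -[leRHS]mulr1 ler_wpM2l ?prodr_ile1 //; first by case/andP: (miss_prob01 n0).
by move=> n _; exact: miss_prob01.
Qed.

Definition fixed_cost a := (1 - beta) * Ea p c a + beta * eps.
Definition age_coef := beta * eps.

Lemma fixed_cost_ge0 a : 0 <= fixed_cost a.
Proof.
have /andP[beta_gt0 beta_lt1] := beta01.
have Ea_ge0 : 0 <= Ea p c a.
  by apply: sumr_ge0 => n _; rewrite mulr_ge0 //; case/andP: (p01 n) => /ltW.
by rewrite /fixed_cost addr_ge0 ?mulr_ge0 ?subr_ge0 ?(ltW beta_gt0) ?(ltW beta_lt1)
  ?(ltW eps_gt0).
Qed.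

Lemma age_coef_gt0 : 0 < age_coef.
Proof. by case/andP: beta01 => beta_gt0 _; rewrite mulr_gt0. Qed.

Lemma ucostE s a :
  u s a = fixed_cost a + age_coef * (1 - Q a) * (s%:R ^+ 2 + 2 * s%:R).
Proof. by rewrite /ucost /Ga /fixed_cost /age_coef; ring. Qed.

Lemma ucost_ge0 s a : 0 <= u s a.
Proof.
have age_ge0 : 0 <= s%:R ^+ 2 + 2 * s%:R :> R by rewrite addr_ge0 ?sqr_ge0.
by rewrite ucostE addr_ge0 ?fixed_cost_ge0 // mulr_ge0 // mulr_ge0 ?subQa_ge0
  ?(ltW age_coef_gt0).
Qed.

Definition bellman (h : nat -> R) s a := u s a + Q a * h 1%N + (1 - Q a) * h s.+1.

Fixpoint expval (pi : policy R N) (f : nat -> R) T hist s : R :=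
  if T is T'.+1 then
    \sum_a pi hist s a * (Q a * expval pi f T' (rcons hist (s, a)) 1
                          + (1 - Q a) * expval pi f T' (rcons hist (s, a)) s.+1)
  else f s.

Lemma expvalS pi f T hist s : expval pi f T.+1 hist s =
  \sum_a pi hist s a * (Q a * expval pi f T (rcons hist (s, a)) 1
                        + (1 - Q a) * expval pi f T (rcons hist (s, a)) s.+1).
Proof. by []. Qed.

Lemma expcostS pi T hist s : EC pi T.+1 hist s =
  \sum_a pi hist s a * (u s a + Q a * EC pi T (rcons hist (s, a)) 1
                        + (1 - Q a) * EC pi T (rcons hist (s, a)) s.+1).
Proof. by []. Qed.

Lemma expcost_increment pi T hist s :
  EC pi T.+2 hist s - EC pi T.+1 hist s =
  \sum_a pi hist s a *
    (Q a * (EC pi T.+1 (rcons hist (s, a)) 1 - EC pi T (rcons hist (s, a)) 1)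
     + (1 - Q a) * (EC pi T.+1 (rcons hist (s, a)) s.+1
                    - EC pi T (rcons hist (s, a)) s.+1)).
Proof.
by rewrite (expcostS _ T.+1) (expcostS _ T) -sumrB; apply: eq_bigr => a _; ring.
Qed.

Section Policy.
Variable pi : policy R N.
Hypothesis pi_policy : is_policy pi.

Lemma policy_ge0 hist s a : 0 <= pi hist s a.
Proof. by case: pi_policy. Qed.

Lemma policy_sum1 hist s : \sum_a pi hist s a = 1.
Proof. by case: pi_policy. Qed.

Lemma expcost_ge0 T hist s : 0 <= EC pi T hist s.
Proof.
elim: T hist s => [|T IH] hist s //=.
apply: sumr_ge0 => a _; rewrite mulr_ge0 ?policy_ge0 //.
have := ucost_ge0 s a; have := mulr_ge0 (Qa_ge0 a) (IH (rcons hist (s, a)) 1%N).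
have := mulr_ge0 (subQa_ge0 a) (IH (rcons hist (s, a)) s.+1); lra.
Qed.

Lemma expcost_ge_bellman (g : R) (h : nat -> R) :
  (forall s a, g + h s <= bellman h s a) ->
  forall T hist s, T%:R * g + h s <= EC pi T hist s + expval pi h T hist s.
Proof.
move=> h_le; elim=> [|T IH] hist s /=; first by rewrite mul0r.
rewrite -big_split /= -(convex_sum_cst (policy_sum1 hist s) (T.+1%:R * g + h s)).
apply: ler_sum => a _; rewrite -mulrDr ler_wpM2l ?policy_ge0 //.
have := ler_wpM2l (Qa_ge0 a) (IH (rcons hist (s, a)) 1%N).
have := ler_wpM2l (subQa_ge0 a) (IH (rcons hist (s, a)) s.+1).
have := h_le s a; rewrite /bellman -natr1; lra.
Qed.

(* The cost at age [s] is at least [age_coef * (1 - Q a) * (s^2 + 2 s)], which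
   is exactly what a quadratic [f] gains in expectation over one step. *)
Lemma expval_le_expcost_increment (f : nat -> R) (C D : R) : 0 <= C ->
  (forall s, (1 <= s)%N -> f s <= C * s%:R ^+ 2 + D) ->
  forall T hist s, expval pi f T.+1 hist s <=
    C + D + C / age_coef * (EC pi T.+1 hist s - EC pi T hist s).
Proof.
move=> C_ge0 f_le; have age_neq0 : age_coef != 0 by rewrite gt_eqF ?age_coef_gt0.
elim=> [|T IH] hist s.
  rewrite /= subr0 -convex_sum_affine ?policy_sum1 //.
  apply: ler_sum => a _; rewrite ler_wpM2l ?policy_ge0 //.
  have := ler_wpM2l (Qa_ge0 a) (f_le 1%N (leqnn 1)).
  have := ler_wpM2l (subQa_ge0 a) (f_le s.+1 (ltn0Sn s)).
  have : 0 <= C / age_coef * fixed_cost a.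
    by rewrite mulr_ge0 ?fixed_cost_ge0 ?divr_ge0 ?(ltW age_coef_gt0).
  have -> : C / age_coef * (u s a + Q a * 0 + (1 - Q a) * 0) =
    C / age_coef * fixed_cost a + C * (1 - Q a) * (s%:R ^+ 2 + 2 * s%:R).
    by rewrite ucostE; field.
  rewrite -natr1; lra.
rewrite expvalS expcost_increment -convex_sum_affine ?policy_sum1 //.
apply: ler_sum => a _; rewrite ler_wpM2l ?policy_ge0 //.
have := ler_wpM2l (Qa_ge0 a) (IH (rcons hist (s, a)) 1%N).
have := ler_wpM2l (subQa_ge0 a) (IH (rcons hist (s, a)) s.+1).
lra.
Qed.

End Policy.

Lemma sum_stationary (phi : nat -> action N) hist s (F : action N -> R) :
  \sum_a stationary R phi hist s a * F a = F (phi s).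
Proof.
rewrite (bigD1 (phi s)) //= /stationary eqxx mul1r big1 ?addr0 // => a /negbTE ->.
by rewrite mul0r.
Qed.

Lemma expcost_stationary_le (phi : nat -> action N) (g hmin : R) (h : nat -> R) :
  (forall s, g + h s = bellman h s (phi s)) -> (forall s, hmin <= h s) ->
  forall T hist s, EC (stationary R phi) T hist s <= T%:R * g + h s - hmin.
Proof.
move=> h_eq h_ge; elim=> [|T IH] hist s /=; first by rewrite mul0r add0r subr_ge0.
rewrite sum_stationary.
have := ler_wpM2l (Qa_ge0 (phi s)) (IH (rcons hist (s, phi s)) 1%N).
have := ler_wpM2l (subQa_ge0 (phi s)) (IH (rcons hist (s, phi s)) s.+1).
have := h_eq s; rewrite /bellman -natr1; lra.
Qed.

Lemma avgcost_stationary_le (phi : nat -> action N) (g hmin : R) (h : nat -> R) :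
  (forall s, g + h s = bellman h s (phi s)) -> (forall s, hmin <= h s) ->
  (avgcost p c r beta eps (stationary R phi) <= g%:E)%E.
Proof.
move=> h_eq h_ge; apply: limn_esup_le_eventually => e e_gt0.
set K := h 1%N - hmin.
exists (Num.trunc (K / e)) => k k_ge; rewrite lee_fin ler_pdivrMr ?ltr0n //.
apply: le_trans (expcost_stationary_le h_eq h_ge k.+1 [::] 1%N) _.
have : K / e < k.+1%:R.
  by apply: lt_le_trans (truncnS_gt _) _; rewrite ler_nat ltnS.
rewrite ltr_pdivrMr // [_ * k.+1%:R]mulrC mulrDr /K; lra.
Qed.

Lemma avgcost_ge_bellman (pi : policy R N) (g C D : R) (h : nat -> R) :
  is_policy pi -> 0 < C ->
  (forall s a, g + h s <= bellman h s a) ->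
  (forall s, (1 <= s)%N -> h s <= C * s%:R ^+ 2 + D) ->
  (g%:E <= avgcost p c r beta eps pi)%E.
Proof.
move=> pi_policy C_gt0 h_le h_quad.
rewrite /avgcost leNgt; apply/negP => /limn_esup_lt_eventually [n [m [mg EC_le]]].
apply: (@increment_growth_contra R (fun T => EC pi T [::] 1%N) g m
  (C / age_coef) (C + D - h 1%N) n mg).
- by rewrite divr_gt0 ?age_coef_gt0.
- by move=> T; exact: expcost_ge0.
- by move=> T nT; have := EC_le T nT; rewrite lee_fin ler_pdivrMr ?ltr0n.
- move=> T; have := expcost_ge_bellman pi_policy h_le T.+1 [::] 1%N.
  have := expval_le_expcost_increment pi_policy (ltW C_gt0) h_quad T [::] 1%N.
  lra.
Qed.

Definition argmin_action (F : action N -> R) := Order.arg_min [set: 'I_N] xpredT F.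

Lemma argmin_action_le F a : F (argmin_action F) <= F a.
Proof. by rewrite /argmin_action; case: arg_minP => // b _; apply. Qed.

Lemma argmin_action_dist F G L : (forall a, `|F a - G a| <= L) ->
  `|F (argmin_action F) - G (argmin_action G)| <= L.
Proof.
move=> FG_le; have := FG_le (argmin_action F); have := FG_le (argmin_action G).
have := argmin_action_le F (argmin_action G).
have := argmin_action_le G (argmin_action F).
rewrite !ler_norml; lra.
Qed.

Definition aQmax := Order.arg_max [set: 'I_N] xpredT Q.
Definition Qmax := Q aQmax.

Lemma Qa_le_Qmax a : Q a <= Qmax.
Proof. by rewrite /Qmax /aQmax; case: arg_maxP => // b _; apply. Qed.

Lemma Qmax_gt0 : 0 < Qmax.
Proof. exact: lt_le_trans Qa_setT_gt0 (Qa_le_Qmax _). Qed.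

Lemma Qmax_neq0 : Qmax != 0.
Proof. by rewrite gt_eqF ?Qmax_gt0. Qed.

Definition abest := Order.arg_min aQmax (fun a => Q a == Qmax) fixed_cost.

Lemma Qa_abest : Q abest = Qmax.
Proof. by rewrite /abest; case: arg_minP => [|b /eqP] //; rewrite /Qmax eqxx. Qed.

Lemma fixed_cost_abest a : Q a = Qmax -> fixed_cost abest <= fixed_cost a.
Proof.
by move=> /eqP Qa; rewrite /abest; case: arg_minP => [|b _ ->] //; rewrite /Qmax eqxx.
Qed.

Definition Kbest := fixed_cost abest.

(* The coefficients are found by matching powers of [s] in [hquad_poisson]. *)
Definition hq2 := age_coef * (1 - Qmax) / Qmax.
Definition hq1 := 2 * (1 - Qmax) * (age_coef + hq2) / Qmax.
Definition hq0 g := (Kbest - g + (1 - Qmax) * (hq2 + hq1)) / Qmax.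
Definition hquad g (s : nat) := hq2 * s%:R ^+ 2 + hq1 * s%:R + hq0 g.

Lemma hq2_ge0 : 0 <= hq2.
Proof.
by rewrite divr_ge0 ?(ltW Qmax_gt0) // mulr_ge0 ?subr_ge0 ?Qa_le1 ?(ltW age_coef_gt0).
Qed.

Lemma hq1_ge0 : 0 <= hq1.
Proof.
rewrite divr_ge0 ?(ltW Qmax_gt0) // mulr_ge0 ?addr_ge0 ?hq2_ge0 ?(ltW age_coef_gt0) //.
by rewrite mulr_ge0 ?subr_ge0 ?Qa_le1.
Qed.

Lemma hquad_poisson g s : g + hquad g s = u s abest + (1 - Q abest) * hquad g s.+1.
Proof.
have := Qmax_neq0.
by rewrite ucostE Qa_abest /hquad /hq0 /hq1 /hq2 /Kbest -[s.+1%:R]natr1 => ?; field.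
Qed.

Definition gmax := Kbest + hq2 + hq1.

Lemma hquad_gmax1 : hquad gmax 1 = 0.
Proof. by have := Qmax_neq0; rewrite /hquad /hq0 /gmax /hq1 /hq2 => ?; field. Qed.

Lemma gmax_ge0 : 0 <= gmax.
Proof.
have := fixed_cost_ge0 abest; have := hq2_ge0; have := hq1_ge0.
by rewrite /gmax /Kbest; lra.
Qed.

Lemma hq0_le_hquad g s : hq0 g <= hquad g s.
Proof.
have := mulr_ge0 hq2_ge0 (sqr_ge0 (s%:R : R)).
by have := mulr_ge0 hq1_ge0 (ler0n R s); rewrite /hquad; lra.
Qed.

Lemma hquad_ge g s : g <= gmax -> (Kbest - gmax) / Qmax <= hquad g s.
Proof.
move=> g_le; apply: le_trans (hq0_le_hquad g s).
rewrite ler_pM2r ?invr_gt0 ?Qmax_gt0 //.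
have : 0 <= (1 - Qmax) * (hq2 + hq1) by rewrite mulr_ge0 ?subr_ge0 ?Qa_le1 ?addr_ge0
  ?hq2_ge0 ?hq1_ge0.
lra.
Qed.

(* Beyond this age the age penalty [abest] saves outweighs any saving in
   fixed cost by an action [a] with [Q a < Qmax]. *)
Definition threshold_for a := if Q a < Qmax then
  Num.trunc ((Kbest / (Qmax - Q a) - (Kbest - gmax) / Qmax) / age_coef) else 0%N.
Definition threshold := (\big[maxn/0%N]_a threshold_for a).+1.

Lemma threshold_le a s : Q a < Qmax -> (threshold <= s)%N ->
  Kbest / (Qmax - Q a) - (Kbest - gmax) / Qmax <= age_coef * s%:R.
Proof.
move=> Qa_lt s_ge; rewrite [age_coef * _]mulrC -ler_pdivrMr ?age_coef_gt0 //.
apply/ltW/(lt_le_trans (truncnS_gt _)); rewrite ler_nat.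
apply: leq_trans s_ge; rewrite ltnS.
by apply: leq_trans (leq_bigmax a); rewrite /threshold_for Qa_lt.
Qed.

Lemma abest_optimal_tail g s a : g <= gmax -> (threshold <= s)%N ->
  u s abest + (1 - Q abest) * hquad g s.+1 <= u s a + (1 - Q a) * hquad g s.+1.
Proof.
move=> g_le s_ge; rewrite !ucostE Qa_abest -/Kbest.
set X := s%:R ^+ 2 + 2 * s%:R.
have [Qa_eq | Qa_lt] := eqVneq (Q a) Qmax.
  by have := fixed_cost_abest Qa_eq; rewrite Qa_eq -/Kbest; lra.
have {Qa_lt} Qa_lt : Q a < Qmax by rewrite lt_neqAle Qa_lt Qa_le_Qmax.
set Y := age_coef * X + hquad g s.+1.
have gap_gt0 : 0 < Qmax - Q a by rewrite subr_gt0.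
have Kbest_le : Kbest <= Y * (Qmax - Q a).
  rewrite -ler_pdivrMr //.
  have : s%:R <= X.
    by have := ler0n R s; rewrite /X; nra.
  move=> /(ler_wpM2l (ltW age_coef_gt0)).
  have := threshold_le Qa_lt s_ge; have := hquad_ge s.+1 g_le.
  rewrite /Y; lra.
have := fixed_cost_ge0 a.
have -> : fixed_cost a + age_coef * (1 - Q a) * X + (1 - Q a) * hquad g s.+1 =
  Kbest + age_coef * (1 - Qmax) * X + (1 - Qmax) * hquad g s.+1
  + (fixed_cost a - Kbest + Y * (Qmax - Q a)) by rewrite /Y; ring.
lra.
Qed.

(* [n] steps of value iteration from [hquad g] for the optimality equation
   without its [Q a * h 1] term, which vanishes once [hrel g 1 = 0]. *)
Fixpoint vi (g : R) (n s : nat) : R :=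
  if n is n'.+1 then
    let F a := u s a - g + (1 - Q a) * vi g n' s.+1 in F (argmin_action F)
  else hquad g s.

Lemma vi_le g n s a : vi g n.+1 s <= u s a - g + (1 - Q a) * vi g n s.+1.
Proof. exact: (argmin_action_le (fun a => u s a - g + (1 - Q a) * vi g n s.+1)). Qed.

Lemma vi_le_hquad g n s : vi g n s <= hquad g s.
Proof.
elim: n s => [|n IH] s //; apply: le_trans (vi_le g n s abest) _.
have := ler_wpM2l (subQa_ge0 abest) (IH s.+1); have := hquad_poisson g s; lra.
Qed.

Definition hlow g := Num.min 0 (hq0 g).

Lemma vi_ge g n s : 0 <= g -> hlow g - n%:R * g <= vi g n s.
Proof.
move=> g_ge0; elim: n s => [|n IH] s.
  by rewrite mul0r subr0 /hlow ge_min hq0_le_hquad orbT.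
rewrite /=; set a := argmin_action _.
have : hlow g <= 0 by rewrite /hlow ge_min lexx.
have := mulr_ge0 (ler0n R n) g_ge0.
have := ler_wpM2l (subQa_ge0 a) (IH s.+1); have := ucost_ge0 s a.
have := Qa_ge0 a; rewrite -natr1; nra.
Qed.

Lemma vi_lipschitz g g' n s :
  `|vi g n s - vi g' n s| <= (n%:R + Qmax^-1) * `|g - g'|.
Proof.
elim: n s => [|n IH] s.
  rewrite add0r /= /hquad /hq0.
  have -> : hq2 * s%:R ^+ 2 + hq1 * s%:R + (Kbest - g + (1 - Qmax) * (hq2 + hq1)) / Qmax
    - (hq2 * s%:R ^+ 2 + hq1 * s%:R + (Kbest - g' + (1 - Qmax) * (hq2 + hq1)) / Qmax)
    = Qmax^-1 * (g' - g) by have := Qmax_neq0 => ?; field.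
  by rewrite normrM ger0_norm ?invr_ge0 ?(ltW Qmax_gt0) // distrC.
apply: (argmin_action_dist (F := fun a => u s a - g + (1 - Q a) * vi g n s.+1)
  (G := fun a => u s a - g' + (1 - Q a) * vi g' n s.+1)) => a.
have := IH s.+1; set d := vi g n s.+1 - vi g' n s.+1 => d_le.
have -> : u s a - g + (1 - Q a) * vi g n s.+1 - (u s a - g' + (1 - Q a) * vi g' n s.+1)
  = (g' - g) + (1 - Q a) * d by rewrite /d; ring.
apply: le_trans (ler_normD _ _) _; rewrite distrC normrM ger0_norm ?subQa_ge0 //.
have : (1 - Q a) * `|d| <= `|d| by rewrite ler_piMl ?normr_ge0 // gerBl Qa_ge0.
rewrite -natr1 !mulrDl mul1r in d_le *; lra.
Qed.

Definition hrel g s := vi g (threshold - s) s.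

Lemma hrel_tail g s : (threshold <= s)%N -> hrel g s = hquad g s.
Proof. by rewrite /hrel -subn_eq0 => /eqP ->. Qed.

Lemma hrel_head g s : (s < threshold)%N -> hrel g s = vi g (threshold - s.+1).+1 s.
Proof. by move=> s_lt; rewrite /hrel subnSK. Qed.

Definition greedy g s := if (s < threshold)%N then
  argmin_action (fun a => u s a - g + (1 - Q a) * hrel g s.+1) else abest.

Lemma hrel_bellman_le g s a : g <= gmax ->
  g + hrel g s <= u s a + (1 - Q a) * hrel g s.+1.
Proof.
move=> g_le; have [s_lt | s_ge] := ltnP s threshold.
  by have := vi_le g (threshold - s.+1) s a; rewrite hrel_head // /hrel; lra.
rewrite !hrel_tail ?(leq_trans s_ge) //.
by have := abest_optimal_tail a g_le s_ge; rewrite -hquad_poisson.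
Qed.

Lemma hrel_bellman_eq g s :
  g + hrel g s = u s (greedy g s) + (1 - Q (greedy g s)) * hrel g s.+1.
Proof.
rewrite /greedy; have [s_lt | s_ge] := ltnP s threshold.
  by rewrite hrel_head // /hrel /=; ring.
by rewrite !hrel_tail ?(leq_trans s_ge) // hquad_poisson.
Qed.

Lemma exists_hrel1_eq0 : exists2 g, 0 <= g <= gmax & hrel g 1 = 0.
Proof.
have cont : continuous (hrel^~ 1%N).
  by apply: lipschitz_continuous => g g'; exact: vi_lipschitz.
have hq0_ge0 : 0 <= hq0 0.
  rewrite /hq0 subr0 divr_ge0 ?(ltW Qmax_gt0) // addr_ge0 ?(fixed_cost_ge0 abest) //.
  by rewrite mulr_ge0 ?subr_ge0 ?Qa_le1 ?addr_ge0 ?hq2_ge0 ?hq1_ge0.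
have hrel0_ge0 : 0 <= hrel 0 1.
  by apply: le_trans (vi_ge _ _ (lexx 0)); rewrite mulr0 subr0 /hlow le_min lexx.
have hrel_gmax_le0 : hrel gmax 1 <= 0 by rewrite -hquad_gmax1 vi_le_hquad.
have between :
    Num.min (hrel 0 1) (hrel gmax 1) <= 0 <= Num.max (hrel 0 1) (hrel gmax 1).
  by rewrite ge_min le_max hrel_gmax_le0 hrel0_ge0 orbT.
have [g g_in hrel_g] := IVT gmax_ge0 (continuous_subspaceT cont) between.
by exists g => //; move: g_in; rewrite in_itv.
Qed.

Lemma acoe_solution : exists g (h : nat -> R) (phi : nat -> action N),
  [/\ forall s, g + h s = bellman h s (phi s),
      forall s a, g + h s <= bellman h s a,
      exists hmin, forall s, hmin <= h s &
      exists C D, 0 < C /\ forall s, (1 <= s)%N -> h s <= C * s%:R ^+ 2 + D].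
Proof.
have [g /andP[g_ge0 g_le] hrel1] := exists_hrel1_eq0.
exists g, (hrel g), (greedy g); split.
- by move=> s; rewrite /bellman hrel1 mulr0 addr0 hrel_bellman_eq.
- by move=> s a; rewrite /bellman hrel1 mulr0 addr0 hrel_bellman_le.
- exists (hlow g - threshold%:R * g) => s; apply: le_trans (vi_ge _ _ g_ge0).
  by rewrite lerD2l lerN2 ler_wpM2r // ler_nat leq_subr.
exists (hq2 + hq1 + 1), `|hq0 g|.
split; first by rewrite ltr_wpDl ?addr_ge0 ?hq2_ge0 ?hq1_ge0.
move=> s s_ge1; apply: le_trans (vi_le_hquad _ _ _) _.
have s_le_sq : s%:R <= s%:R ^+ 2 :> R by rewrite expr2 ler_peMl // ler1n.
have := ler_wpM2l hq1_ge0 s_le_sq; have := ler_norm (hq0 g); have := sqr_ge0 (s%:R : R).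
rewrite /hquad; lra.
Qed.

End MDP.

Theorem lemma1 (R : realType) (N : nat) (p c r : 'I_N -> R) (beta eps : R) :
  (0 < N)%N ->
  (forall n, 0 < p n <= 1) ->
  (forall n, 0 <= c n) ->
  (forall n, 0 < r n <= 1) ->
  0 < beta < 1 ->
  0 < eps ->
  exists phi : nat -> action N,
    forall pi : policy R N, is_policy pi ->
      (avgcost p c r beta eps (stationary R phi) <= avgcost p c r beta eps pi)%E.
Proof.
move=> N_gt0 p01 c_ge0 r01 beta01 eps_gt0.
have [g [h [phi [h_eq h_le [hmin h_ge] [C [D [C_gt0 h_quad]]]]]]] :=
  acoe_solution N_gt0 p01 c_ge0 r01 beta01 eps_gt0.
exists phi => pi pi_policy.
apply: le_trans (avgcost_stationary_le p01 r01 h_eq h_ge) _.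
exact: (avgcost_ge_bellman p01 c_ge0 r01 beta01 eps_gt0 pi_policy C_gt0 h_le h_quad).
Qed.
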